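(* Let $r\geq 5$ and $0\leq k\leq 15$. Then the edge set of $Q_{2^r}$ can be partitioned into the edge sets of $2^{r-1}-k$ Hamiltonian cycles (copies of $C_{2^{2^r}}$) of $Q_{2^r}$ and the edge set of a DVOP$[k]$ in $Q_{2^r}$.
   Context: $Q_q$ denotes the $q$-dimensional hypercube graph (vertices are $q$-tuples of $0$'s and $1$'s, adjacent iff they differ in exactly one coordinate). $C_N$ is the cycle on $N$ vertices. $P_k$ is the path with vertices $0,1,\dots,k$ and edges $\hat{j}$ joining $j-1$ and $j$. For a graph $G$, a DVOP$[k]$ is a family $\{p_v\}_{v\in V(G)}$ of embeddings $p_v:P_k\to G$ such that (a) $p_v(\hat{j})=p_{v'}(\hat{j'})$ implies $v=v'$ and $j=j'$, and (b) $p_v(0)=v$ for every $v$; its edge set is the union of the edge images of all $p_v$. *)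

From mathcomp Require Import all_boot.
Set Implicit Arguments. Unset Strict Implicit. Unset Printing Implicit Defensive.

Section Graphs.
Variables (T : finType) (adj : rel T).

Definition graph_edges : {set {set T}} :=
  [set e : {set T} | [exists x, exists y, adj x y && (e == [set x; y])]].

Definition path_emb (k : nat) (p : 'I_k.+1 -> T) : Prop :=
  injective p /\
  forall j : 'I_k, adj (p (widen_ord (leqnSn k) j)) (p (lift ord0 j)).

(* image of the edge \hat{j+1} (joining j and j+1) of P_k, for j : 'I_k *)
Definition path_edge (k : nat) (p : 'I_k.+1 -> T) (j : 'I_k) : {set T} :=
  [set p (widen_ord (leqnSn k) j); p (lift ord0 j)].

Definition is_dvop (k : nat) (P : T -> 'I_k.+1 -> T) : Prop :=
  (forall v, path_emb (P v)) /\
  (forall v v' (j j' : 'I_k), path_edge (P v) j = path_edge (P v') j' ->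
      v = v' /\ j = j') /\
  (forall v, P v ord0 = v).

Definition dvop_edges (k : nat) (P : T -> 'I_k.+1 -> T) : {set {set T}} :=
  [set path_edge (P v) j | v : T, j : 'I_k].

Definition cycle_emb (N : nat) (c : 'I_N -> T) : Prop :=
  injective c /\ forall i : 'I_N, adj (c i) (c (ordS i)).

Definition cycle_edges (N : nat) (c : 'I_N -> T) : {set {set T}} :=
  [set [set c i; c (ordS i)] | i : 'I_N].

Definition ham_cycle (c : 'I_#|T| -> T) : Prop := cycle_emb c.

End Graphs.

Definition cube (q : nat) : finType := {ffun 'I_q -> bool}.
Definition cube_adj (q : nat) : rel (cube q) :=
  fun x y => #|[set i | x i != y i]| == 1.

From mathcomp Require Import all_boot zify.

Set Implicit Arguments. Unset Strict Implicit. Unset Printing Implicit Defensive.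

(* For every t < 2^j, the edges of Q_(2^(j+1)) split into 2^j - t Hamiltonian
   cycles and t oriented 2-factors L_0, ..., L_(t-1) such that every walk
   v, L_0 v, L_1 (L_0 v), ... is injective; these walks form a DVOP[t] whose
   edges are exactly those of the 2-factors.  The decomposition is built by
   induction from the 4-cycle Q_2, using Q_(2a) = Q_a x Q_a (box product): a
   Hamiltonian cycle C of Q_a yields the two Hamiltonian cycles of the torus
   C x C, a 2-factor yields one 2-factor in each coordinate, and for odd t one
   torus cycle is used as an extra 2-factor.  The walks of the product are
   staircases alternating between the coordinates of the walks of the factor;
   the extra step along a torus cycle keeps them injective because the first
   two successors, along the last Hamiltonian cycle, of the end of every walk
   lie off the walk, an invariant carried through the induction.  This gives
   the theorem for all k < 2^(r-1), in particular for k <= 15 when r >= 5. *)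

Lemma divn_modn_succ n N : 0 < N -> n %% N != N.-1 ->
  n.+1 %% N = (n %% N).+1 /\ n.+1 %/ N = n %/ N.
Proof.
move=> N_gt0 n_lt.
have lt : (n %% N).+1 < N by have := ltn_pmod n N_gt0; lia.
have -> : n.+1 = n %/ N * N + (n %% N).+1 by rewrite {1}(divn_eq n N) addnS.
by rewrite modnMDl modn_small // divnMDl // (divn_small lt) addn0.
Qed.

Lemma divn_modn_succ_last n N : 0 < N -> n %% N = N.-1 ->
  n.+1 %% N = 0 /\ n.+1 %/ N = (n %/ N).+1.
Proof.
move=> N_gt0 n_last.
have -> : n.+1 = (n %/ N).+1 * N.
  by rewrite {1}(divn_eq n N) n_last mulSn addnC -addSn prednK.
by rewrite modnMl mulnK.
Qed.

Lemma eqn_mod_square n m N :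
  (n == m %[mod N * N]) = (n %/ N == m %/ N %[mod N]) && (n %% N == m %% N).
Proof.
have dvdN : N %| N * N by rewrite dvdn_mull.
have digits k : k %% (N * N) = k %/ N %% N * N + k %% N.
  by rewrite {1}(divn_eq (k %% (N * N)) N) -modn_divl (modn_dvdm _ dvdN).
apply/eqP/andP => [E|[/eqP En /eqP Em]]; last by rewrite !digits En Em.
by rewrite !modn_divl -(modn_dvdm n dvdN) -(modn_dvdm m dvdN) E.
Qed.

Lemma set2_eq_cases (T : finType) (a b c d : T) :
  [set a; b] = [set c; d] -> (a = c /\ b = d) \/ (a = d /\ b = c).
Proof.
move=> E.
have /set2P ha : a \in [set c; d] by rewrite -E set21.
have /set2P hb : b \in [set c; d] by rewrite -E set22.
have /set2P hc : c \in [set a; b] by rewrite E set21.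
have /set2P hd : d \in [set a; b] by rewrite E set22.
by case: ha hb hc hd => -> [] -> [] ? [] ?; subst; auto.
Qed.

Lemma disjointP (T : finType) (A B : {set T}) :
  reflect (forall x, x \in A -> x \in B -> False) [disjoint A & B].
Proof.
apply: (iffP idP) => [D x xA|AB]; first by rewrite (disjointFr D xA).
rewrite disjoint_subset; apply/subsetP => x xA; rewrite inE.
by apply/negP => xB; apply: (AB x).
Qed.

Section Decomposition.
Variables (T : finType) (adj : rel T).
Local Notation N := #|T|.

(* A Hamiltonian cycle is encoded by an [N]-periodic enumeration of its
   vertices, and a class of edges by a map [f] contributing the edges
   [{u, f u}]. *)
Definition ham_seq (g : nat -> T) :=
  (forall n, adj (g n) (g n.+1)) /\ (forall n m, (g n == g m) = (n == m %[mod N])).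

Definition map_edges (f : T -> T) : {set {set T}} := [set [set u; f u] | u : T].

Definition oriented_2factor (f : T -> T) :=
  [/\ injective f, forall u, adj u (f u) & forall u, f (f u) != u].

Fixpoint walk (L : nat -> T -> T) (v : T) (n : nat) : T :=
  if n is n'.+1 then L n' (walk L v n') else v.

Definition ham_pos (g : nat -> T) (u : T) : nat :=
  if [pick i : 'I_N | g i == u] is Some i then val i else 0.

Definition ham_succ (g : nat -> T) (u : T) : T := g (ham_pos g u).+1.

Definition edge_partition n (F : nat -> {set {set T}}) :=
  (forall e, e \in graph_edges adj <-> exists2 o, o < n & e \in F o) /\
  (forall o o' e, o < n -> o' < n -> e \in F o -> e \in F o' -> o = o').

Definition dec_map s (G : nat -> nat -> T) (L : nat -> T -> T) o :=
  if o < s then ham_succ (G o) else L (o - s).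

(* The second clause is only needed to extend the walks by one step along
   the last Hamiltonian cycle in the inductive step. *)
Definition walk_invariant s t (G : nat -> nat -> T) (L : nat -> T -> T) :=
  forall v, (forall a b, a <= t -> b <= t -> walk L v a = walk L v b -> a = b) /\
   (forall j, j <= t -> ham_succ (G s.-1) (walk L v t) != walk L v j /\
      ham_succ (G s.-1) (ham_succ (G s.-1) (walk L v t)) != walk L v j).

(* [3 < N] makes the points at offsets [0..3] along a Hamiltonian cycle
   distinct, which the torus step needs. *)
Definition cycle_factor_dec s t G L :=
  [/\ 0 < s, 3 < N, (forall i, i < s -> ham_seq (G i)),
      (forall j, j < t -> oriented_2factor (L j)) &
      edge_partition (s + t) (fun o => map_edges (dec_map s G L o)) /\
      walk_invariant s t G L].

Lemma graph_edgesP e :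
  reflect (exists x y, adj x y /\ e = [set x; y]) (e \in graph_edges adj).
Proof.
rewrite inE; apply: (iffP existsP) => [[x /existsP[y /andP[h /eqP ->]]]|[x [y [h ->]]]].
  by exists x, y.
by exists x; apply/existsP; exists y; rewrite h eqxx.
Qed.

Lemma mem_graph_edges x y : adj x y -> [set x; y] \in graph_edges adj.
Proof. by move=> h; apply/graph_edgesP; exists x, y. Qed.

Lemma graph_edges_adj x y :
  symmetric adj -> [set x; y] \in graph_edges adj -> adj x y.
Proof.
move=> sym /graph_edgesP[u [v [h /set2_eq_cases[[-> ->]|[-> ->]]]]] //.
by rewrite sym.
Qed.

Lemma map_edges_mem f u : [set u; f u] \in map_edges f.
Proof. by apply/imsetP; exists u. Qed.

Lemma eq_map_edges f f' : f =1 f' -> map_edges f = map_edges f'.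
Proof. by move=> ff'; apply: eq_imset => u; rewrite ff'. Qed.

Lemma edge_partition_sub n F o :
  edge_partition n F -> o < n -> F o \subset graph_edges adj.
Proof. by case=> cover _ ho; apply/subsetP => e he; apply/cover; exists o. Qed.

Lemma edge_partition_refine n F n2 F2 (pi : nat -> nat * bool)
    (half : nat -> bool -> {set {set T}}) :
  edge_partition n F ->
  (forall o, o < n -> F o = half o false :|: half o true) ->
  (forall o, o < n -> [disjoint half o false & half o true]) ->
  (forall o2, o2 < n2 -> (pi o2).1 < n /\ F2 o2 = half (pi o2).1 (pi o2).2) ->
  (forall o2 o2', o2 < n2 -> o2' < n2 -> pi o2 = pi o2' -> o2 = o2') ->
  (forall o b, o < n -> exists2 o2, o2 < n2 & pi o2 = (o, b)) ->
  edge_partition n2 F2.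
Proof.
move=> [cover uniq_class] FE half_disj piF pi_inj pi_onto.
have in_F o b e : o < n -> e \in half o b -> e \in F o.
  by move=> ho he; rewrite FE // inE; case: b he => ->; rewrite ?orbT.
split=> [e|o2 o2' e ho2 ho2'].
  rewrite cover; split=> [[o ho]|[o2 ho2]].
    rewrite FE // => /setUP eh.
    have [b hb] : exists b, e \in half o b by case: eh => ?; [exists false|exists true].
    have [o2 ho2 pio2] := pi_onto o b ho; exists o2 => //.
    by have [_ ->] := piF o2 ho2; rewrite pio2.
  by have [ho ->] := piF o2 ho2 => /in_F he; exists (pi o2).1; last exact: he.
have [ho -> he] := piF o2 ho2; have [ho' -> he'] := piF o2' ho2'.
apply: pi_inj => //.
have eq_o := uniq_class _ _ e ho ho' (in_F _ _ _ ho he) (in_F _ _ _ ho' he').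
move: eq_o he he' (half_disj _ ho).
case: (pi o2) (pi o2') => o b [o' b'] /= <- he he' /disjointP D.
by case: b b' he he' => [] [] // he he'; [case: (D e he') | case: (D e he)].
Qed.

Section HamSeq.
Variable g : nat -> T.
Hypothesis g_ham : ham_seq g.

Lemma seq_card_gt0 : 0 < N.
Proof. by apply/card_gt0P; exists (g 0). Qed.

Lemma ham_eq n m : (g n == g m) = (n == m %[mod N]).
Proof. by case: g_ham. Qed.

Lemma ham_eqmod n m : g n = g m <-> n = m %[mod N].
Proof. by split=> [/eqP|E]; [rewrite ham_eq => /eqP | apply/eqP; rewrite ham_eq E]. Qed.

Lemma ham_mod n : g (n %% N) = g n.
Proof. by apply/ham_eqmod; rewrite modn_mod. Qed.

Lemma ham_eqS n m : g n = g m -> g n.+1 = g m.+1.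
Proof. by move/ham_eqmod=> E; apply/ham_eqmod; rewrite -[n.+1]addn1 -modnDml E modnDml addn1. Qed.

Lemma ham_surj u : exists2 n, n < N & g n = u.
Proof.
pose f (i : 'I_N) := g i.
have f_inj : injective f.
  by move=> i j /ham_eqmod; rewrite !modn_small ?ltn_ord //; apply: val_inj.
have : u \in codom f by apply: inj_card_onto; rewrite ?card_ord.
by case/codomP=> i ->; exists i.
Qed.

Lemma ham_succE n : ham_succ g (g n) = g n.+1.
Proof.
rewrite /ham_succ /ham_pos; case: pickP => [i /eqP/ham_eqS //|none].
have [m hm Em] := ham_surj (g n).
by move: (none (Ordinal hm)); rewrite /= Em eqxx.
Qed.

Lemma ham_edgesP e :
  reflect (exists n, e = [set g n; g n.+1]) (e \in map_edges (ham_succ g)).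
Proof.
apply: (iffP imsetP) => [[u _ ->]|[n ->]]; last by exists (g n); rewrite ?ham_succE.
by have [n _ <-] := ham_surj u; exists n; rewrite ham_succE.
Qed.

Lemma cycle_edges_ham : cycle_edges (fun i : 'I_N => g i) = map_edges (ham_succ g).
Proof.
apply/setP => e; apply/imsetP/ham_edgesP => [[i _ ->]|[n ->]] /=.
  by exists i; rewrite ham_mod.
have lt : n %% N < N by rewrite ltn_mod seq_card_gt0.
by exists (Ordinal lt); rewrite //= !ham_mod (ham_eqS (ham_mod n)).
Qed.

Lemma ham_cycle_seq : ham_cycle adj (fun i : 'I_#|T| => g i).
Proof.
split=> [i j /ham_eqmod|i /=]; first by rewrite !modn_small //; apply: val_inj.
by rewrite ham_mod; case: g_ham.
Qed.

Lemma ham_addn_inj a p p' : p < N -> p' < N -> g (a + p) = g (a + p') -> p = p'.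
Proof. by move=> hp hp' /eqP; rewrite ham_eq eqn_modDl !modn_small // => /eqP. Qed.

Hypothesis N_gt2 : 2 < N.

Lemma ham_succ_neq u : ham_succ g u != u /\ ham_succ g (ham_succ g u) != u.
Proof.
have [n _ <-] := ham_surj u; rewrite !ham_succE.
split; apply/eqP; rewrite -[X in _ = g X]addn0.
  by rewrite -addn1 => /ham_addn_inj; lia.
by rewrite -addn2 => /ham_addn_inj; lia.
Qed.

Lemma ham_succ_2factor : oriented_2factor (ham_succ g).
Proof.
split=> [u v|u|u]; last by case: (ham_succ_neq u).
  have [n _ <-] := ham_surj u; have [m _ <-] := ham_surj v.
  by rewrite !ham_succE => /ham_eqmod; rewrite -(addn1 n) -(addn1 m) => /eqP;
     rewrite eqn_modDr => /eqP/ham_eqmod.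
by have [n _ <-] := ham_surj u; rewrite ham_succE; case: g_ham.
Qed.

End HamSeq.
End Decomposition.

Section Box.
Variables (T : finType) (adj : rel T).

Definition box_adj : rel (T * T) := fun u v =>
  (adj u.1 v.1 && (u.2 == v.2)) || ((u.1 == v.1) && adj u.2 v.2).

Definition hedge (x x' y : T) : {set T * T} := [set (x, y); (x', y)].
Definition vedge (x y y' : T) : {set T * T} := [set (x, y); (x, y')].

Definition hlift (S : {set {set T}}) : {set {set T * T}} :=
  [set e | [exists x, exists x', exists y,
     [&& x != x', [set x; x'] \in S & e == hedge x x' y]]].
Definition vlift (S : {set {set T}}) : {set {set T * T}} :=
  [set e | [exists x, exists y, exists y',
     [&& y != y', [set y; y'] \in S & e == vedge x y y']]].

Lemma hliftP (S : {set {set T}}) e :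
  reflect (exists x x' y, [/\ x != x', [set x; x'] \in S & e = hedge x x' y])
          (e \in hlift S).
Proof.
rewrite inE; apply: (iffP existsP).
  by case=> x /existsP[x' /existsP[y /and3P[h1 h2 /eqP h3]]]; exists x, x', y.
case=> x [x' [y [h1 h2 h3]]]; exists x; apply/existsP; exists x'; apply/existsP.
by exists y; rewrite h1 h2 h3 eqxx.
Qed.

Lemma vliftP (S : {set {set T}}) e :
  reflect (exists x y y', [/\ y != y', [set y; y'] \in S & e = vedge x y y'])
          (e \in vlift S).
Proof.
rewrite inE; apply: (iffP existsP).
  by case=> x /existsP[y /existsP[y' /and3P[h1 h2 /eqP h3]]]; exists x, y, y'.
case=> x [y [y' [h1 h2 h3]]]; exists x; apply/existsP; exists y; apply/existsP.
by exists y'; rewrite h1 h2 h3 eqxx.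
Qed.

Lemma hedge_sym x x' y : hedge x x' y = hedge x' x y.
Proof. exact: setUC. Qed.

Lemma vedge_sym x y y' : vedge x y y' = vedge x y' y.
Proof. exact: setUC. Qed.

Lemma hedge_vedge x x' y z w w' : hedge x x' y = vedge z w w' -> x = x'.
Proof.
move=> E.
have /set2P h1 : (x, y) \in vedge z w w' by rewrite -E set21.
have /set2P h2 : (x', y) \in vedge z w w' by rewrite -E set22.
by case: h1 h2 => [] [-> _] [] [-> _].
Qed.

Lemma hlift_vlift_disjoint (S S' : {set {set T}}) : [disjoint hlift S & vlift S'].
Proof.
apply/disjointP => e /hliftP[x [x' [y [xx' _ ->]]]] /vliftP[z [w [w' [_ _]]]].
by move/hedge_vedge/eqP; rewrite (negbTE xx').
Qed.

Lemma hlift_meet (S S' : {set {set T}}) e :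
  e \in hlift S -> e \in hlift S' -> exists2 f, f \in S & f \in S'.
Proof.
have fst_hedge x x' y : [set z.1 | z in hedge x x' y] = [set x; x'].
  by rewrite imsetU1 imset_set1.
case/hliftP=> x [x' [y [_ h ->]]] /hliftP[z [z' [w [_ h' E]]]].
by exists [set x; x'] => //; rewrite -(fst_hedge x x' y) E fst_hedge.
Qed.

Lemma vlift_meet (S S' : {set {set T}}) e :
  e \in vlift S -> e \in vlift S' -> exists2 f, f \in S & f \in S'.
Proof.
have snd_vedge x y y' : [set z.2 | z in vedge x y y'] = [set y; y'].
  by rewrite imsetU1 imset_set1.
case/vliftP=> x [y [y' [_ h ->]]] /vliftP[z [w [w' [_ h' E]]]].
by exists [set y; y'] => //; rewrite -(snd_vedge x y y') E snd_vedge.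
Qed.

Lemma hliftS (S S' : {set {set T}}) : S \subset S' -> hlift S \subset hlift S'.
Proof.
move=> /subsetP sub; apply/subsetP => e /hliftP[x [x' [y [h1 h2 h3]]]].
by apply/hliftP; exists x, x', y; split => //; apply: sub.
Qed.

Lemma vliftS (S S' : {set {set T}}) : S \subset S' -> vlift S \subset vlift S'.
Proof.
move=> /subsetP sub; apply/subsetP => e /vliftP[x [y [y' [h1 h2 h3]]]].
by apply/vliftP; exists x, y, y'; split => //; apply: sub.
Qed.

Hypothesis adj_sym : symmetric adj.
Hypothesis adj_irr : irreflexive adj.

Lemma box_graph_edges :
  graph_edges box_adj = hlift (graph_edges adj) :|: vlift (graph_edges adj).
Proof.
have neq_adj x x' : adj x x' -> x != x'.
  by move=> h; apply: contraTneq h => ->; rewrite adj_irr.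
apply/setP => e; apply/idP/setUP.
  case/graph_edgesP => -[x y] [[x' y'] [/orP[/andP[/= h /eqP <-]|/andP[/= /eqP <- h]] ->]].
    by left; apply/hliftP; exists x, x', y; rewrite neq_adj ?mem_graph_edges.
  by right; apply/vliftP; exists x, y, y'; rewrite neq_adj ?mem_graph_edges.
case=> [/hliftP[x [x' [y [_ h ->]]]]|/vliftP[x [y [y' [_ h ->]]]]];
  apply: mem_graph_edges; rewrite /box_adj /= (graph_edges_adj adj_sym h) eqxx //.
by rewrite orbT.
Qed.

Lemma edge_partition_box n (F : nat -> {set {set T}}) :
  edge_partition adj n F ->
  edge_partition box_adj n (fun o => hlift (F o) :|: vlift (F o)).
Proof.
move=> FP; have [cover uniq_class] := FP; split=> [e|o o' e ho ho'].
  rewrite box_graph_edges; split=> [/setUP[]|[o ho /setUP[]]].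
  - case/hliftP=> x [x' [y [xx' /cover[o ho h] ->]]]; exists o => //.
    by apply/setUP; left; apply/hliftP; exists x, x', y.
  - case/vliftP=> x [y [y' [yy' /cover[o ho h] ->]]]; exists o => //.
    by apply/setUP; right; apply/vliftP; exists x, y, y'.
  - by move/(subsetP (hliftS (edge_partition_sub FP ho))) => he; apply/setUP; left.
  - by move/(subsetP (vliftS (edge_partition_sub FP ho))) => he; apply/setUP; right.
case/setUP=> he /setUP[] he'.
- by have [f hf hf'] := hlift_meet he he'; exact: (uniq_class o o' f).
- by move: (hlift_vlift_disjoint (F o) (F o')) => /disjointP/(_ e he he').
- by move: (hlift_vlift_disjoint (F o') (F o)) => /disjointP/(_ e he' he).
- by have [f hf hf'] := vlift_meet he he'; exact: (uniq_class o o' f).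
Qed.

Definition lift_fst (f : T -> T) (u : T * T) : T * T := (f u.1, u.2).
Definition lift_snd (f : T -> T) (u : T * T) : T * T := (u.1, f u.2).

Section Lift.
Variable f : T -> T.
Hypothesis f_2factor : oriented_2factor adj f.

Lemma lift_fst_2factor : oriented_2factor box_adj (lift_fst f).
Proof.
case: f_2factor => f_inj f_adj f_nback; split.
- by move=> [x y] [x' y'] [/f_inj -> ->].
- by move=> [x y]; rewrite /box_adj /= f_adj eqxx.
- by move=> [x y]; apply/eqP => -[/eqP]; apply/negP.
Qed.

Lemma lift_snd_2factor : oriented_2factor box_adj (lift_snd f).
Proof.
case: f_2factor => f_inj f_adj f_nback; split.
- by move=> [x y] [x' y'] [-> /f_inj ->].
- by move=> [x y]; rewrite /box_adj /= f_adj eqxx orbT.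
- by move=> [x y]; apply/eqP => -[/eqP]; apply/negP.
Qed.

Lemma neq_2factor x : x != f x.
Proof.
by case: f_2factor => _ f_adj _; apply: contraTneq (f_adj x) => <-; rewrite adj_irr.
Qed.

Lemma lift_edges : hlift (map_edges f) :|: vlift (map_edges f) =
  map_edges (lift_fst f) :|: map_edges (lift_snd f).
Proof.
apply/setP => e; apply/setUP/setUP.
  case=> [/hliftP[x [x' [y [_ /imsetP[u _ Eu] ->]]]]|/vliftP[x [y [y' [_ /imsetP[u _ Eu] ->]]]]].
    left; apply/imsetP; exists (u, y) => //.
    by case/set2_eq_cases: Eu => -[-> ->] //; rewrite hedge_sym.
  right; apply/imsetP; exists (x, u) => //.
  by case/set2_eq_cases: Eu => -[-> ->] //; rewrite vedge_sym.
case=> /imsetP[[x y] _ ->]; [left; apply/hliftP|right; apply/vliftP].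
  by exists x, (f x), y; rewrite neq_2factor map_edges_mem.
by exists x, y, (f y); rewrite neq_2factor map_edges_mem.
Qed.

Lemma lift_edges_disjoint :
  [disjoint map_edges (lift_fst f) & map_edges (lift_snd f)].
Proof.
apply/disjointP => e /imsetP[[x y] _ ->] /imsetP[[x' y'] _ /hedge_vedge/eqP].
by rewrite (negbTE (neq_2factor x)).
Qed.

End Lift.

Section Torus.
Variable g : nat -> T.
Hypothesis g_ham : ham_seq adj g.
Local Notation N := #|T|.

Let N_gt0 : 0 < N := seq_card_gt0 g.

(* The two Hamiltonian cycles of the torus [g] x [g]: [torus_seq] advances the
   second coordinate, except that it advances the first one when the sum of
   the positions is [N - 1] modulo [N]; [torus_seq'] is its mirror image. *)
Definition torus_seq (n : nat) : T * T := (g (n %/ N), g (n %% N + N.-1 * (n %/ N))).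
Definition torus_seq' (n : nat) : T * T := ((torus_seq n).2, (torus_seq n).1).

Lemma torus_seqS n : torus_seq n.+1 =
  if (n %/ N + (n %% N + N.-1 * (n %/ N))) %% N == N.-1
  then (g (n %/ N).+1, g (n %% N + N.-1 * (n %/ N)))
  else (g (n %/ N), g (n %% N + N.-1 * (n %/ N)).+1).
Proof.
have -> : (n %/ N + (n %% N + N.-1 * (n %/ N))) %% N = n %% N.
  have -> : n %/ N + (n %% N + N.-1 * (n %/ N)) = n %/ N * N + n %% N.
    by rewrite addnCA addnC -mulSn prednK // mulnC.
  by rewrite modnMDl modn_mod.
case: eqP => [n_last|/eqP n_lt]; rewrite /torus_seq.
  have [-> ->] := divn_modn_succ_last N_gt0 n_last.
  by rewrite n_last add0n mulnS addnC.
by have [-> ->] := divn_modn_succ N_gt0 n_lt.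
Qed.

Lemma torus_seq_surj a b : exists n, torus_seq n = (g a, g b).
Proof.
exists (a * N + (b + a) %% N).
rewrite /torus_seq divnMDl // divn_small ?ltn_pmod // addn0 modnMDl modn_mod.
congr pair; apply/(ham_eqmod g_ham); rewrite modnDml.
have -> : b + a + N.-1 * a = a * N + b by have := N_gt0; nia.
by rewrite modnMDl.
Qed.

Lemma torus_seq_eq n m : (torus_seq n == torus_seq m) = (n == m %[mod N * N]).
Proof.
rewrite eqn_mod_square /torus_seq xpair_eqE !(ham_eq g_ham).
case: eqP => //= E1.
rewrite -[in LHS](modnDmr (n %% N)) -modnMmr E1 modnMmr modnDmr.
by rewrite eqn_modDr !modn_mod.
Qed.

Lemma torus_seq_ham : ham_seq box_adj torus_seq.
Proof.
split=> [n|n m]; last by rewrite torus_seq_eq card_prod.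
rewrite torus_seqS; case: ifP => _; rewrite /torus_seq /box_adj /= eqxx.
  by case: g_ham => ->.
by case: g_ham => -> _; rewrite orbT.
Qed.

Lemma torus_succ a b : ham_succ torus_seq (g a, g b) =
  if (a + b) %% N == N.-1 then (g a.+1, g b) else (g a, g b.+1).
Proof.
have [n En] := torus_seq_surj a b.
rewrite -En (ham_succE torus_seq_ham) torus_seqS.
move: En => -[Ea Eb].
have -> : (n %/ N + (n %% N + N.-1 * (n %/ N))) %% N = (a + b) %% N.
  by move/(ham_eqmod g_ham): Ea => ma; move/(ham_eqmod g_ham): Eb => mb;
     rewrite -modnDm ma mb modnDm.
by case: ifP => _; rewrite ?(ham_eqS g_ham Ea) ?(ham_eqS g_ham Eb) ?Ea ?Eb.
Qed.

Lemma box_adj_swap (u v : T * T) : box_adj (u.2, u.1) (v.2, v.1) = box_adj u v.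
Proof. by rewrite /box_adj /= orbC; congr orb; apply: andbC. Qed.

Lemma torus_seq'_ham : ham_seq box_adj torus_seq'.
Proof.
case: torus_seq_ham => seq_adj seq_eq; split=> [n|n m]; first by rewrite box_adj_swap.
by rewrite -seq_eq /torus_seq' !xpair_eqE andbC.
Qed.

Lemma torus_succ' a b : ham_succ torus_seq' (g a, g b) =
  if (a + b) %% N == N.-1 then (g a, g b.+1) else (g a.+1, g b).
Proof.
have [n En] := torus_seq_surj b a.
have E' : torus_seq' n = (g a, g b) by rewrite /torus_seq' En.
rewrite -E' (ham_succE torus_seq'_ham) {1}/torus_seq'.
have := torus_succ b a; rewrite -En (ham_succE torus_seq_ham) addnC.
by case: ifP => _ ->.
Qed.

Hypothesis N_gt2 : 2 < N.

Lemma ham_neqS a : g a != g a.+1.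
Proof.
by apply/eqP; rewrite -addn1 -[X in g X = _]addn0 => /(ham_addn_inj g_ham); lia.
Qed.

Lemma ham_no_backtrack a c : g a = g c.+1 -> g a.+1 = g c -> False.
Proof.
move=> E1 /(ham_eqS g_ham); rewrite -E1 -addn2 -[X in _ = g X]addn0.
by move/(ham_addn_inj g_ham); lia.
Qed.

Lemma map_edges_unit_step (S : T * T -> T * T) :
  (forall a b, S (g a, g b) = (g a.+1, g b) \/ S (g a, g b) = (g a, g b.+1)) ->
  map_edges S \subset hlift (map_edges (ham_succ g)) :|: vlift (map_edges (ham_succ g)).
Proof.
move=> S_step; apply/subsetP => e /imsetP[[x y] _ ->].
have [a _ <-] := ham_surj g_ham x; have [b _ <-] := ham_surj g_ham y.
have g_edge n : [set g n; g n.+1] \in map_edges (ham_succ g).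
  by apply/(ham_edgesP g_ham); exists n.
case: (S_step a b) => ->; apply/setUP; [left; apply/hliftP|right; apply/vliftP].
  by exists (g a), (g a.+1), (g b); rewrite ham_neqS g_edge.
by exists (g a), (g b), (g b.+1); rewrite ham_neqS g_edge.
Qed.

Lemma torus_edges :
  hlift (map_edges (ham_succ g)) :|: vlift (map_edges (ham_succ g)) =
  map_edges (ham_succ torus_seq') :|: map_edges (ham_succ torus_seq).
Proof.
have sub1 : map_edges (ham_succ torus_seq) \subset
    hlift (map_edges (ham_succ g)) :|: vlift (map_edges (ham_succ g)).
  by apply: map_edges_unit_step => a b; rewrite torus_succ; case: ifP; auto.
have sub2 : map_edges (ham_succ torus_seq') \subset
    hlift (map_edges (ham_succ g)) :|: vlift (map_edges (ham_succ g)).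
  by apply: map_edges_unit_step => a b; rewrite torus_succ'; case: ifP; auto.
apply/eqP; rewrite eqEsubset; apply/andP; split; last by rewrite subUset sub1 sub2.
apply/subsetP => e /setUP[].
  case/hliftP=> x [x' [y [_ /(ham_edgesP g_ham)[n En] ->]]].
  have -> : hedge x x' y = hedge (g n) (g n.+1) y.
    by case/set2_eq_cases: En => -[-> ->] //; rewrite hedge_sym.
  have [m _ <-] := ham_surj g_ham y; apply/setUP.
  case E : ((n + m) %% N == N.-1); [right|left]; apply/imsetP; exists (g n, g m) => //.
    by rewrite torus_succ E.
  by rewrite torus_succ' E.
case/vliftP=> x [y [y' [_ /(ham_edgesP g_ham)[n En] ->]]].
have -> : vedge x y y' = vedge x (g n) (g n.+1).
  by case/set2_eq_cases: En => -[-> ->] //; rewrite vedge_sym.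
have [m _ <-] := ham_surj g_ham x; apply/setUP.
case E : ((m + n) %% N == N.-1); [left|right]; apply/imsetP; exists (g m, g n) => //.
  by rewrite torus_succ' E.
by rewrite torus_succ E.
Qed.

Lemma torus_edges_disjoint :
  [disjoint map_edges (ham_succ torus_seq') & map_edges (ham_succ torus_seq)].
Proof.
have sum_eq a b c d : g a = g c -> g b = g d -> (a + b) %% N = (c + d) %% N.
  by move=> /(ham_eqmod g_ham) E1 /(ham_eqmod g_ham) E2; rewrite -modnDm E1 E2 modnDm.
apply/disjointP => e /imsetP[[x y] _ ->] /imsetP[[x' y'] _].
have [a _ <-] := ham_surj g_ham x; have [b _ <-] := ham_surj g_ham y.
have [c _ <-] := ham_surj g_ham x'; have [d _ <-] := ham_surj g_ham y'.
rewrite torus_succ torus_succ'; case: ifP => Eab; case: ifP => Ecd.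
- by move/esym/hedge_vedge/eqP; rewrite (negbTE (ham_neqS c)).
- case/set2_eq_cases => -[[E1 E2]] [E3 E4]; last exact: ham_no_backtrack E2 E4.
  by rewrite (sum_eq _ _ _ _ E1 E2) Ecd in Eab.
- case/set2_eq_cases => -[[E1 E2]] [E3 E4]; last exact: ham_no_backtrack E1 E3.
  by rewrite (sum_eq _ _ _ _ E1 E2) Ecd in Eab.
- by move/hedge_vedge/eqP; rewrite (negbTE (ham_neqS a)).
Qed.

Lemma torus_succ_offset a b p q : exists p' q',
  [/\ p' + q' = (p + q).+1, q' <= q.+1 &
     ham_succ torus_seq (g (a + p), g (b + q)) = (g (a + p'), g (b + q'))].
Proof.
rewrite torus_succ -[(a + p).+1]addnS -[(b + q).+1]addnS; case: ifP => _; first by exists p.+1, q; split; rewrite ?addSn.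
by exists p, q.+1; split; rewrite ?addnS.
Qed.

Lemma torus_succ'_offset a b p q : exists p' q',
  [/\ p' + q' = (p + q).+1, q' <= q.+1 &
     ham_succ torus_seq' (g (a + p), g (b + q)) = (g (a + p'), g (b + q'))].
Proof.
rewrite torus_succ' -[(a + p).+1]addnS -[(b + q).+1]addnS; case: ifP => _; first by exists p, q.+1; split; rewrite ?addnS.
by exists p.+1, q; split; rewrite ?addSn.
Qed.

(* One step along [torus_seq] followed by two along [torus_seq'] advances the
   second coordinate at most twice: [torus_seq'] only advances it at sums
   [N - 1] modulo [N], which cannot occur twice in a row. *)
Lemma torus_three_steps a b : exists p1 q1 p2 q2 p3 q3,
  [/\ ham_succ torus_seq (g a, g b) = (g (a + p1), g (b + q1)),
      ham_succ torus_seq' (g (a + p1), g (b + q1)) = (g (a + p2), g (b + q2)),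
      ham_succ torus_seq' (g (a + p2), g (b + q2)) = (g (a + p3), g (b + q3)),
      [/\ p1 + q1 = 1, p2 + q2 = 2 & p3 + q3 = 3] & q3 <= 2].
Proof.
have step' := torus_succ'_offset a b.
have first_step : ham_succ torus_seq (g (a + 0), g (b + 0)) =
    if (a + b) %% N == N.-1 then (g (a + 1), g (b + 0)) else (g (a + 0), g (b + 1)).
  by rewrite torus_succ !addn0 !addn1.
rewrite -[g a](congr1 g (addn0 a)) -[g b](congr1 g (addn0 b)) first_step.
case: ifP => _.
  have [p2 [q2 [e2 l2 E2]]] := step' 1 0; have [p3 [q3 [e3 l3 E3]]] := step' p2 q2.
  by exists 1, 0, p2, q2, p3, q3; split => //; try split; lia.
have [C1|C1] := boolP ((a + (b + 1)) %% N == N.-1).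
  have wrap : (a + (b + 2)) %% N == N.-1 = false.
    rewrite (_ : a + (b + 2) = (a + (b + 1)).+1); last by lia.
    have [-> _] := divn_modn_succ_last N_gt0 (eqP C1); lia.
  exists 0, 1, 0, 2, 1, 2; split => //.
    by rewrite torus_succ' addn0 C1 -addnS.
  by rewrite torus_succ' addn0 wrap !addn1.
have [p3 [q3 [e3 l3 E3]]] := step' 1 1.
exists 0, 1, 1, 1, p3, q3; split => //; try by [split|lia].
by rewrite torus_succ' addn0 (negbTE C1) !addn1.
Qed.

End Torus.
End Box.

Section BoxStep.
Variables (T : finType) (adj : rel T).
Local Notation N := #|T|.
Variables (s t : nat) (G : nat -> nat -> T) (L : nat -> T -> T) (od : bool).
Hypothesis adj_sym : symmetric adj.
Hypothesis adj_irr : irreflexive adj.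
Hypothesis dec : cycle_factor_dec adj s t G L.

Let g := G s.-1.

Let s_gt0 : 0 < s. Proof. by case: dec. Qed.
Let N_gt3 : 3 < N. Proof. by case: dec. Qed.
Let G_ham i : i < s -> ham_seq adj (G i). Proof. by case: dec => _ _ G_ham _ _; apply: G_ham. Qed.
Let L_2factor j : j < t -> oriented_2factor adj (L j).
Proof. by case: dec => _ _ _ L_2factor _; apply: L_2factor. Qed.
Let part : edge_partition adj (s + t) (fun o => map_edges (dec_map s G L o)).
Proof. by case: dec => _ _ _ _ []. Qed.
Let inv : walk_invariant s t G L. Proof. by case: dec => _ _ _ _ []. Qed.
Let g_ham : ham_seq adj g. Proof. by apply: G_ham; rewrite ltn_predL. Qed.

(* When [od] holds, the torus cycle [torus_seq g] of the last Hamiltonian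
   cycle becomes the extra 2-factor [box_L (t + t)]. *)
Definition box_s := s + s - od.
Definition box_t := t + t + od.
Definition box_G i := if odd i then torus_seq (G i./2) else torus_seq' (G i./2).
Definition box_L j :=
  if j < t + t then (if odd j then lift_snd (L j./2) else lift_fst (L j./2))
  else ham_succ (torus_seq g).

Lemma box_walk x y k : k <= t + t ->
  walk box_L (x, y) k = (walk L x (uphalf k), walk L y k./2).
Proof.
elim: k => [|k IH] hk //=.
by rewrite (IH (ltnW hk)) /box_L hk uphalf_half; case: (odd k).
Qed.

Lemma box_walk_end x y : walk box_L (x, y) (t + t) = (walk L x t, walk L y t).
Proof. by rewrite box_walk // uphalf_half addnn odd_double half_double. Qed.

Lemma box_walk_inj x y a b : a <= t + t -> b <= t + t ->
  walk box_L (x, y) a = walk box_L (x, y) b -> a = b.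
Proof.
move=> ha hb; rewrite !box_walk // !uphalf_half => -[Ex Ey].
have := (inv x).1 _ _ _ _ Ex; have := (inv y).1 _ _ _ _ Ey; lia.
Qed.

Lemma off_box_walk x y a b p q k :
  g a = walk L x t -> g b = walk L y t -> 0 < p + q -> p <= 3 -> q <= 2 ->
  k <= t + t -> (g (a + p), g (b + q)) != walk box_L (x, y) k.
Proof.
move=> Ea Eb hpq hp hq hk; rewrite box_walk //; apply/eqP => -[Exk Eyk].
have hk2 : k./2 <= t by lia.
have [y_inj y_succ] := inv y; have [y_succ1 y_succ2] := y_succ _ hk2.
case: q hpq hq Eyk => [|[|[|q]]] //= hpq _ Eyk.
- rewrite addn0 Eb in Eyk; have := y_inj _ _ (leqnn t) hk2 Eyk => kt.
  move: Exk; rewrite uphalf_half (_ : odd k + k./2 = t); last by lia.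
  rewrite -Ea -[X in _ = g X]addn0 => /(ham_addn_inj g_ham); lia.
- by move: y_succ1; rewrite -/g -Eb (ham_succE g_ham) -Eyk addn1 eqxx.
- by move: y_succ2; rewrite -/g -Eb !(ham_succE g_ham) -Eyk addn2 eqxx.
Qed.

Lemma offset_neq a b p q p' q' : p <= 3 -> q <= 3 -> p' <= 3 -> q' <= 3 ->
  p + q != p' + q' -> (g (a + p), g (b + q)) != (g (a + p'), g (b + q')).
Proof.
move=> hp hq hp' hq' hpq; apply: contra hpq => /eqP[Ea Eb].
have lt3 n : n <= 3 -> n < N by lia.
by rewrite (ham_addn_inj g_ham (lt3 _ hp) (lt3 _ hp') Ea) (ham_addn_inj g_ham (lt3 _ hq) (lt3 _ hq') Eb).
Qed.


Lemma box_last_cycle : box_G box_s.-1 = if od then torus_seq' g else torus_seq g.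
Proof.
rewrite /box_s /box_G; case: od.
  by rewrite (_ : (s + s - 1).-1 = (s.-1).*2) ?odd_double ?doubleK //; lia.
by rewrite (_ : (s + s - 0).-1 = (s.-1).*2.+1) /= ?odd_double ?uphalf_double //; lia.
Qed.

Lemma box_walk_invariant_even x y :
  (forall a b, a <= t + t -> b <= t + t ->
     walk box_L (x, y) a = walk box_L (x, y) b -> a = b) /\
  (forall j, j <= t + t ->
     ham_succ (torus_seq g) (walk box_L (x, y) (t + t)) != walk box_L (x, y) j /\
     ham_succ (torus_seq g) (ham_succ (torus_seq g) (walk box_L (x, y) (t + t)))
       != walk box_L (x, y) j).
Proof.
split=> [a b|j hj]; first exact: box_walk_inj.
have [a _ Ea] := ham_surj g_ham (walk L x t); have [b _ Eb] := ham_surj g_ham (walk L y t).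
rewrite box_walk_end -Ea -Eb -[g a](congr1 g (addn0 a)) -[g b](congr1 g (addn0 b)).
have [p1 [q1 [e1 _ ->]]] := torus_succ_offset g_ham a b 0 0.
have [p2 [q2 [e2 _ ->]]] := torus_succ_offset g_ham a b p1 q1.
by split; apply: (off_box_walk Ea Eb); lia.
Qed.

Lemma box_walk_invariant_odd x y :
  (forall a b, a <= (t + t).+1 -> b <= (t + t).+1 ->
     walk box_L (x, y) a = walk box_L (x, y) b -> a = b) /\
  (forall j, j <= (t + t).+1 ->
     ham_succ (torus_seq' g) (walk box_L (x, y) (t + t).+1) != walk box_L (x, y) j /\
     ham_succ (torus_seq' g) (ham_succ (torus_seq' g) (walk box_L (x, y) (t + t).+1))
       != walk box_L (x, y) j).
Proof.
have [a _ Ea] := ham_surj g_ham (walk L x t); have [b _ Eb] := ham_surj g_ham (walk L y t).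
have [p1 [q1 [p2 [q2 [p3 [q3 [E1 E2 E3 [e1 e2 e3] q3_le]]]]]]] :=
  torus_three_steps g_ham (ltnW N_gt3) a b.
have W_last : walk box_L (x, y) (t + t).+1 = (g (a + p1), g (b + q1)).
  by rewrite /= box_walk_end /box_L ltnn -Ea -Eb.
have last_new k : k <= t + t -> walk box_L (x, y) (t + t).+1 != walk box_L (x, y) k.
  by move=> hk; rewrite W_last; apply: (off_box_walk Ea Eb); lia.
split=> [i j hi hj Eij|j hj].
  have le_or_last k : k <= (t + t).+1 -> k <= t + t \/ k = (t + t).+1 by lia.
  case/le_or_last: hi => hi'; case/le_or_last: hj => hj'.
  - exact: box_walk_inj hi' hj' Eij.
  - by move: (last_new i hi'); rewrite -hj' -Eij eqxx.
  - by move: (last_new j hj'); rewrite -hi' Eij eqxx.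
  - by rewrite hi' hj'.
rewrite W_last E2 E3.
have [hj'|->] : j <= t + t \/ j = (t + t).+1 by lia.
  by split; apply: (off_box_walk Ea Eb); lia.
by rewrite W_last; split; apply: offset_neq; lia.
Qed.

Lemma box_walk_invariant : walk_invariant box_s box_t box_G box_L.
Proof.
move=> [x y]; rewrite box_last_cycle /box_t.
by case: od; rewrite ?addn1 ?addn0; [apply: box_walk_invariant_odd|apply: box_walk_invariant_even].
Qed.

(* [box_class o2 = (o, b)]: class [o2] of the product is the half
   [box_half o b] of the lift of class [o] of the factor. *)
Definition box_class o2 :=
  if o2 < box_s then (o2./2, odd o2)
  else if o2 - box_s < t + t then (s + (o2 - box_s)./2, odd (o2 - box_s))
  else (s.-1, true).

Definition box_half o (b : bool) : T * T -> T * T :=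
  if o < s then (if b then ham_succ (torus_seq (G o)) else ham_succ (torus_seq' (G o)))
  else (if b then lift_snd (L (o - s)) else lift_fst (L (o - s))).

Lemma box_classP o2 : o2 < box_s + box_t ->
  (box_class o2).1 < s + t /\
  dec_map box_s box_G box_L o2 = box_half (box_class o2).1 (box_class o2).2.
Proof.
rewrite /box_class /dec_map /box_half /box_s /box_t => ho2.
case: ifP => h1.
  rewrite /box_G /= (_ : o2./2 < s); last by lia.
  by split; [lia | case: (odd o2)].
case: ifP => h2 /=.
  rewrite (_ : s + _ < s = false) ?addKn /box_L ?h2; last by lia.
  by split; [lia | case: (odd _)].
by rewrite /box_L h2 ltn_predL s_gt0; split; first lia.
Qed.

Lemma box_class_inj o2 o2' : o2 < box_s + box_t -> o2' < box_s + box_t ->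
  box_class o2 = box_class o2' -> o2 = o2'.
Proof.
rewrite /box_class /box_s /box_t => ho2 ho2'.
by do 2 case: ifP => ? //; do ?case: ifP => ? //;
  move=> E; move: (congr1 fst E) (congr1 snd E) => /=; lia.
Qed.

Lemma box_class_onto o b : o < s + t -> exists2 o2, o2 < box_s + box_t & box_class o2 = (o, b).
Proof.
rewrite /box_class /box_s /box_t => ho.
have [hos|hos] := ltnP o s.
  have [last|/negbTE nlast] := boolP [&& od, o == s.-1 & b].
    exists (s + s - od + (t + t)); first by move: last; case: od; lia.
    rewrite ifF ?addKn ?ltnn; last by lia.
    by case/and3P: last => _ /eqP -> ->.
  exists (o + o + b); first by move: nlast; case: od b; lia.
  by rewrite ifT; [congr pair; lia | move: nlast; case: od b; lia].
exists (s + s - od + ((o - s) + (o - s) + b)); first lia.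
by rewrite ifF ?addKn ?ifT; [congr pair; lia | lia | lia].
Qed.

Lemma box_half_edges o : o < s + t ->
  hlift (map_edges (dec_map s G L o)) :|: vlift (map_edges (dec_map s G L o)) =
  map_edges (box_half o false) :|: map_edges (box_half o true).
Proof.
move=> ho; rewrite /dec_map /box_half; case: ifP => hos.
  exact: torus_edges (G_ham hos) (ltnW N_gt3).
by apply: lift_edges => //; apply: L_2factor; lia.
Qed.

Lemma box_half_disjoint o : o < s + t ->
  [disjoint map_edges (box_half o false) & map_edges (box_half o true)].
Proof.
move=> ho; rewrite /box_half; case: ifP => hos.
  exact: torus_edges_disjoint (G_ham hos) (ltnW N_gt3).
by apply: lift_edges_disjoint => //; apply: L_2factor; lia.
Qed.

Lemma box_partition : edge_partition (box_adj adj) (box_s + box_t)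
  (fun o2 => map_edges (dec_map box_s box_G box_L o2)).
Proof.
apply: (edge_partition_refine (edge_partition_box adj_sym adj_irr part)
          (pi := box_class) (half := fun o b => map_edges (box_half o b))).
- exact: box_half_edges.
- exact: box_half_disjoint.
- by move=> o2 /box_classP[? ->].
- exact: box_class_inj.
- exact: box_class_onto.
Qed.

Lemma box_dec : cycle_factor_dec (box_adj adj) box_s box_t box_G box_L.
Proof.
have NN_gt3 : 3 < #|{: T * T}| by rewrite card_prod; nia.
split; [rewrite /box_s; lia | exact: NN_gt3 | move=> i hi | move=> j hj | ].
- rewrite /box_G; case: (odd i); [apply: torus_seq_ham|apply: torus_seq'_ham];
  by apply: G_ham; rewrite /box_s in hi; lia.
- rewrite /box_L; case: ifP => hjt; last exact: ham_succ_2factor (torus_seq_ham g_ham) (ltnW NN_gt3).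
  by case: (odd j); [apply: lift_snd_2factor|apply: lift_fst_2factor]; apply: L_2factor; lia.
- by split; [exact: box_partition | exact: box_walk_invariant].
Qed.
End BoxStep.

Section Transfer.
Variables (T T' : finType) (adj : rel T) (adj' : rel T').
Variables (f : T' -> T) (f' : T -> T').
Hypothesis fK : cancel f f'.
Hypothesis f'K : cancel f' f.
Hypothesis f_adj : forall u v, adj' u v = adj (f u) (f v).

Let card_eq : #|T'| = #|T|. Proof. by apply: bij_eq_card; exists f'. Qed.

Definition edge_image (e : {set T'}) : {set T} := f @: e.

Let edge_image_inj : injective edge_image. Proof. exact: imset_inj (can_inj fK). Qed.

Let edge_image2 (x y : T') : edge_image [set x; y] = [set f x; f y].
Proof. by rewrite /edge_image imsetU1 imset_set1. Qed.

Let edge_image2' (x y : T) : edge_image [set f' x; f' y] = [set x; y].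
Proof. by rewrite edge_image2 !f'K. Qed.

Lemma ham_seq_iso g : ham_seq adj g -> ham_seq adj' (fun n => f' (g n)).
Proof.
case=> g_adj g_eq; split=> [n|n m]; first by rewrite f_adj !f'K.
by rewrite (inj_eq (can_inj f'K)) g_eq card_eq.
Qed.

Lemma oriented_2factor_iso p :
  oriented_2factor adj p -> oriented_2factor adj' (fun u => f' (p (f u))).
Proof.
case=> p_inj p_adj p_nback; split=> [u v /(can_inj f'K)/p_inj/(can_inj fK) //|u|u].
  by rewrite f_adj f'K.
by rewrite f'K; apply: contra (p_nback (f u)) => /eqP {2}<-; rewrite f'K.
Qed.

Lemma ham_succ_iso g u :
  ham_seq adj g -> ham_succ (fun n => f' (g n)) u = f' (ham_succ g (f u)).
Proof.
move=> g_ham; have g'_ham := ham_seq_iso g_ham.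
have [n _ <-] := ham_surj g'_ham u.
by rewrite (ham_succE g'_ham) f'K (ham_succE g_ham).
Qed.

Lemma map_edges_iso p e :
  (e \in map_edges (fun u => f' (p (f u)))) = (edge_image e \in map_edges p).
Proof.
apply/imsetP/imsetP => [[u _ ->]|[u _ E]]; first by exists (f u); rewrite // edge_image2 f'K.
by exists (f' u) => //; apply: edge_image_inj; rewrite E edge_image2 !f'K.
Qed.

Lemma graph_edges_iso e : (e \in graph_edges adj') = (edge_image e \in graph_edges adj).
Proof.
apply/graph_edgesP/graph_edgesP => [[x [y [h ->]]]|[x [y [h E]]]].
  by exists (f x), (f y); rewrite edge_image2 -f_adj.
by exists (f' x), (f' y); rewrite f_adj !f'K; split=> //; apply: edge_image_inj; rewrite E edge_image2'.
Qed.

Lemma edge_partition_iso n (F : nat -> {set {set T}}) (F' : nat -> {set {set T'}}) : edge_partition adj n F ->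
  (forall o e, o < n -> (e \in F' o) = (edge_image e \in F o)) -> edge_partition adj' n F'.
Proof.
move=> [cover uniq_class] FF'; split=> [e|o o' e ho ho'].
  rewrite graph_edges_iso cover.
  by split=> -[o ho he]; exists o; rewrite ?FF' // -?FF'.
by rewrite !FF' //; apply: uniq_class.
Qed.

Lemma walk_iso L v n :
  walk (fun j u => f' (L j (f u))) v n = f' (walk L (f v) n).
Proof. by elim: n => [|n IH] /=; rewrite ?fK // IH f'K. Qed.

Lemma cycle_factor_dec_iso s t G L : cycle_factor_dec adj s t G L ->
  cycle_factor_dec adj' s t (fun i n => f' (G i n)) (fun j u => f' (L j (f u))).
Proof.
case=> s_gt0 N_gt3 G_ham L_2factor [part inv]; split; rewrite ?card_eq //.
- by move=> i hi; apply/ham_seq_iso/G_ham.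
- by move=> j hj; apply/oriented_2factor_iso/L_2factor.
split.
  apply: (edge_partition_iso part) => o e ho; rewrite /dec_map; case: ifP => hos.
    have -> : map_edges (ham_succ (fun n => f' (G o n))) =
              map_edges (fun u => f' (ham_succ (G o) (f u))).
      by apply: eq_map_edges => u; rewrite ham_succ_iso //; apply: G_ham.
    exact: (map_edges_iso (ham_succ (G o))).
  exact: (map_edges_iso (L (o - s))).
have g_ham : ham_seq adj (G s.-1) by apply: G_ham; rewrite ltn_predL.
move=> v; have [walk_inj walk_succ] := inv (f v); split.
  by move=> a b ha hb; rewrite !walk_iso => /(can_inj f'K); apply: walk_inj.
move=> j hj; rewrite !walk_iso !ham_succ_iso // !f'K !(inj_eq (can_inj f'K)).
exact: walk_succ.
Qed.

End Transfer.

Lemma cube_adj_sym q : symmetric (@cube_adj q).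
Proof. by move=> x y; rewrite /cube_adj; congr (_ == _); apply: eq_card => i; rewrite !inE eq_sym. Qed.

Lemma cube_adj_irr q : irreflexive (@cube_adj q).
Proof.
by move=> x; rewrite /cube_adj (_ : [set i | _] = set0) ?cards0 //; apply/setP => i; rewrite !inE eqxx.
Qed.

Definition cube_split a (x : cube (a + a)) : cube a * cube a :=
  ([ffun i => x (lshift a i)], [ffun j => x (rshift a j)]).

Definition cube_join a (p : cube a * cube a) : cube (a + a) :=
  [ffun k => match split k with inl i => p.1 i | inr j => p.2 j end].

Lemma cube_splitK a : cancel (@cube_split a) (@cube_join a).
Proof.
move=> x; apply/ffunP => k; rewrite ffunE.
by case: splitP => [i|j] /= E; rewrite ffunE; congr (x _); apply: val_inj.
Qed.

Lemma cube_joinK a : cancel (@cube_join a) (@cube_split a).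
Proof.
move=> [x y]; congr pair; apply/ffunP => i; rewrite !ffunE.
  by rewrite (unsplitK (inl _ i)).
by rewrite (unsplitK (inr _ i)).
Qed.

Lemma card_cube_diff q (x y : cube q) : #|[set i | x i != y i]| = \sum_(i < q) (x i != y i).
Proof. by rewrite -sum1_card big_mkcond; apply: eq_bigr => i _; rewrite inE; case: (x i != y i). Qed.

Lemma card_cube_diff_eq0 q (x y : cube q) : (#|[set i | x i != y i]| == 0) = (x == y).
Proof.
rewrite cards_eq0; apply/eqP/eqP => [E|->]; last by apply/setP => i; rewrite !inE eqxx.
apply/ffunP => i; apply/eqP; apply: contraT => xy.
by have := in_set0 i; rewrite -E inE xy.
Qed.

Lemma card_cube_diff_split a (u v : cube (a + a)) :
  #|[set i | u i != v i]| =
  #|[set i | (cube_split u).1 i != (cube_split v).1 i]| +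
  #|[set i | (cube_split u).2 i != (cube_split v).2 i]|.
Proof.
rewrite !card_cube_diff big_split_ord.
by congr (_ + _); apply: eq_bigr => i _; rewrite !ffunE.
Qed.

Lemma cube_adj_split a u v :
  @cube_adj (a + a) u v = box_adj (@cube_adj a) (cube_split u) (cube_split v).
Proof.
rewrite /cube_adj /box_adj card_cube_diff_split -!card_cube_diff_eq0.
move: #|[set i | (cube_split u).1 i != _]| #|[set i | (cube_split u).2 i != _]| => d1 d2.
by case: d1 => [|[|d1]]; case: d2 => [|[|d2]].
Qed.

Definition square_adj : rel (bool * bool) := box_adj (fun a b : bool => a != b).

Definition square_seq (n : nat) : bool * bool :=
  match n %% 4 with
  | 0 => (false, false) | 1 => (true, false) | 2 => (true, true) | _ => (false, true)
  end.

Lemma square_seq_ham : ham_seq square_adj square_seq.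
Proof.
have card4 : #|{: bool * bool}| = 4 by rewrite card_prod card_bool.
rewrite /ham_seq card4 /square_seq; split=> [n|n m].
  have [/eqP n3|n3] := boolP (n %% 4 == 3).
    by have [-> _] := divn_modn_succ_last (isT : 0 < 4) n3; rewrite n3.
  have [-> _] := divn_modn_succ (isT : 0 < 4) n3.
  by move: n3 (ltn_pmod n (isT : 0 < 4)); case: (n %% 4) => [|[|[|[|]]]].
move: (ltn_pmod n (isT : 0 < 4)) (ltn_pmod m (isT : 0 < 4)).
by case: (n %% 4) => [|[|[|[|]]]]; case: (m %% 4) => [|[|[|[|]]]].
Qed.

Lemma square_dec : cycle_factor_dec square_adj 1 0 (fun _ => square_seq) (fun _ => id).
Proof.
have card4 : #|{: bool * bool}| = 4 by rewrite card_prod card_bool.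
split=> //; first by rewrite card4.
  by move=> i _; exact: square_seq_ham.
split=> [|v]; last first.
  split=> [a b|j]; [rewrite !leqn0 => /eqP-> /eqP-> // | rewrite leqn0 => /eqP->].
  by apply: (ham_succ_neq square_seq_ham); rewrite card4.
split=> [e|o o' e]; last by rewrite !ltnS !leqn0 => /eqP-> /eqP->.
split=> [/graph_edgesP[u [v [uv ->]]]|[o]]; last first.
  rewrite ltnS leqn0 => /eqP-> /(ham_edgesP square_seq_ham)[n ->].
  by apply: mem_graph_edges; case: square_seq_ham.
exists 0 => //; apply/(ham_edgesP square_seq_ham).
move: u v uv => [[] []] [[] []] //= _;
  first [ by exists 0 | by exists 0; rewrite setUC | by exists 1 | by exists 1; rewrite setUC
        | by exists 2 | by exists 2; rewrite setUC | by exists 3 | by exists 3; rewrite setUC ].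
Qed.

Definition cube2_pair (x : cube 2) : bool * bool := (x ord0, x ord_max).

Definition pair_cube2 (p : bool * bool) : cube 2 :=
  [ffun i : 'I_2 => if i == ord0 then p.1 else p.2].

Lemma cube2_pairK : cancel cube2_pair pair_cube2.
Proof.
move=> x; apply/ffunP => i; rewrite ffunE /=.
by case: ifP => [/eqP -> //|]; case: i => -[|[|]] //= ? _; congr (x _); apply: val_inj.
Qed.

Lemma pair_cube2K : cancel pair_cube2 cube2_pair.
Proof. by move=> [a b]; rewrite /cube2_pair !ffunE. Qed.

Lemma cube2_adj u v : @cube_adj 2 u v = square_adj (cube2_pair u) (cube2_pair v).
Proof.
have last1 : lift ord0 (ord0 : 'I_1) = ord_max :> 'I_2 by apply: val_inj.
rewrite /cube_adj card_cube_diff !big_ord_recl big_ord0 last1 /square_adj /box_adj /=.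
by case: (u ord0) (v ord0) (u ord_max) (v ord_max) => [] [] [] [].
Qed.

Lemma cube2_dec : cycle_factor_dec (@cube_adj 2) 1 0
  (fun _ n => pair_cube2 (square_seq n)) (fun _ u => pair_cube2 (cube2_pair u)).
Proof. exact (cycle_factor_dec_iso cube2_pairK pair_cube2K cube2_adj square_dec). Qed.

Lemma cube_dec j t : t < 2 ^ j ->
  exists G L, cycle_factor_dec (@cube_adj (2 ^ j.+1)) (2 ^ j - t) t G L.
Proof.
elim: j t => [|j IH] t ht.
  have -> : t = 0 by move: ht; rewrite expn0; lia.
  by exists (fun _ n => pair_cube2 (square_seq n)), (fun _ u => pair_cube2 (cube2_pair u));
     exact: cube2_dec.
have [G [L dec]] : exists G L, cycle_factor_dec (@cube_adj (2 ^ j.+1)) (2 ^ j - t./2) t./2 G L.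
  by apply: IH; rewrite expnS in ht; lia.
have Es : box_s (2 ^ j - t./2) (odd t) = 2 ^ j.+1 - t.
  by rewrite /box_s expnS; have := odd_double_half t; lia.
have Et : box_t t./2 (odd t) = t by rewrite /box_t; have := odd_double_half t; lia.
have := box_dec (odd t) (@cube_adj_sym _) (@cube_adj_irr _) dec.
rewrite Es Et [2 ^ j.+2]expnS mul2n -addnn => box_dec.
by eexists _, _; exact (cycle_factor_dec_iso (@cube_splitK _) (@cube_joinK _) (@cube_adj_split _) box_dec).
Qed.

Section DvopOfDecomposition.
Variables (T : finType) (adj : rel T).
Variables (s k : nat) (G : nat -> nat -> T) (L : nat -> T -> T).
Hypothesis dec : cycle_factor_dec adj s k G L.
Local Notation N := #|T|.

Let G_ham i : i < s -> ham_seq adj (G i). Proof. by case: dec => _ _ G_ham _ _; apply: G_ham. Qed.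
Let L_2factor j : j < k -> oriented_2factor adj (L j).
Proof. by case: dec => _ _ _ L_2factor _; apply: L_2factor. Qed.
Let part : edge_partition adj (s + k) (fun o => map_edges (dec_map s G L o)).
Proof. by case: dec => _ _ _ _ []. Qed.
Let inv : walk_invariant s k G L. Proof. by case: dec => _ _ _ _ []. Qed.

Definition walk_dvop (v : T) (j : 'I_k.+1) : T := walk L v j.

Lemma walk_start_inj n : n <= k -> injective (fun v => walk L v n).
Proof.
elim: n => [|n IH] hn v v' //= E; have [L_inj _ _] := L_2factor hn.
exact: IH (ltnW hn) _ _ (L_inj _ _ E).
Qed.

Lemma path_edge_walk v (j : 'I_k) :
  path_edge (walk_dvop v) j = [set walk L v j; L j (walk L v j)].
Proof. by []. Qed.

Lemma dvop_edges_walkP e :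
  reflect (exists2 j, j < k & e \in map_edges (L j)) (e \in dvop_edges walk_dvop).
Proof.
apply: (iffP imset2P) => [[v j _ _ ->]|[j hj /imsetP[u _ ->]]].
  by exists j; rewrite ?path_edge_walk ?map_edges_mem.
have walk_inj := walk_start_inj (ltnW hj).
have : u \in codom (fun v => walk L v j) by apply: inj_card_onto.
by case/codomP=> v ->; exists v (Ordinal hj).
Qed.

Lemma dec_map_factor j : dec_map s G L (s + j) = L j.
Proof. by rewrite /dec_map ltnNge leq_addr addKn. Qed.

Lemma map_edges_cycle (i : 'I_s) :
  map_edges (dec_map s G L i) = cycle_edges (fun x : 'I_N => G i x).
Proof. by rewrite /dec_map ltn_ord (cycle_edges_ham (G_ham (ltn_ord i))). Qed.

Lemma walk_dvopP : is_dvop adj walk_dvop.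
Proof.
have [_ uniq_class] := part.
have in_class v (j : 'I_k) :
    path_edge (walk_dvop v) j \in map_edges (dec_map s G L (s + j)).
  by rewrite dec_map_factor path_edge_walk map_edges_mem.
split=> [v|]; last split=> // v v' j j' E.
  split=> [a b E|j]; first exact/val_inj/((inv v).1 _ _ (ltn_ord a) (ltn_ord b) E).
  by case: (L_2factor (ltn_ord j)).
have ej : j = j'.
  apply/val_inj/(@addnI s)/(uniq_class _ _ _ _ _ (in_class v j));
    by rewrite ?ltn_add2l ?ltn_ord // E.
subst j'; split=> //; apply: (walk_start_inj (ltnW (ltn_ord j))).
move: E; rewrite !path_edge_walk => /set2_eq_cases[[]|[E1 E2]] //.
by have [_ _ /(_ (walk L v' j))] := L_2factor (ltn_ord j); rewrite -E1 E2 eqxx.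
Qed.

Lemma cycles_dvop_edges :
  (\bigcup_(i < s) cycle_edges (fun x : 'I_N => G i x)) :|: dvop_edges walk_dvop
    = graph_edges adj.
Proof.
have [cover _] := part.
apply/setP => e; apply/setUP/idP => [[/bigcupP[i _]|/dvop_edges_walkP[j hj]]|].
- by rewrite -map_edges_cycle => he; apply/cover; exists i; rewrite ?ltn_addr.
- by move=> he; apply/cover; exists (s + j); rewrite ?ltn_add2l ?dec_map_factor.
case/cover => o ho he; have [hos|hos] := ltnP o s.
  by left; apply/bigcupP; exists (Ordinal hos); rewrite // -map_edges_cycle.
right; apply/dvop_edges_walkP; exists (o - s); first lia.
by move: he; rewrite /dec_map ltnNge hos.
Qed.

Lemma dec_ham_cycle (i : 'I_s) : ham_cycle adj (fun x : 'I_N => G i x).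
Proof. exact: ham_cycle_seq (G_ham (ltn_ord i)). Qed.

Lemma cycle_edges_disjoint (i j : 'I_s) : i != j ->
  [disjoint cycle_edges (fun x : 'I_N => G i x) & cycle_edges (fun x : 'I_N => G j x)].
Proof.
have [_ uniq_class] := part.
move=> ij; apply/disjointP => e; rewrite -!map_edges_cycle => ei ej.
have := uniq_class _ _ _ (ltn_addr _ (ltn_ord i)) (ltn_addr _ (ltn_ord j)) ei ej.
by move/val_inj/eqP; rewrite (negbTE ij).
Qed.

Lemma cycle_dvop_edges_disjoint (i : 'I_s) :
  [disjoint cycle_edges (fun x : 'I_N => G i x) & dvop_edges walk_dvop].
Proof.
have [_ uniq_class] := part.
apply/disjointP => e; rewrite -map_edges_cycle => ei /dvop_edges_walkP[j hj].
rewrite -dec_map_factor => ej.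
have := uniq_class _ _ _ (ltn_addr _ (ltn_ord i)) _ ei ej; rewrite ltn_add2l => /(_ hj).
by have := ltn_ord i; lia.
Qed.

End DvopOfDecomposition.

Theorem proposition9 (r k : nat) :
  5 <= r -> k <= 15 ->
  exists (H : 'I_(2 ^ r.-1 - k) -> 'I_#|cube (2 ^ r)| -> cube (2 ^ r))
         (P : cube (2 ^ r) -> 'I_k.+1 -> cube (2 ^ r)),
    (forall i, ham_cycle (@cube_adj (2 ^ r)) (H i)) /\
    is_dvop (@cube_adj (2 ^ r)) P /\
    (\bigcup_(i < 2 ^ r.-1 - k) cycle_edges (H i)) :|: dvop_edges P
      = graph_edges (@cube_adj (2 ^ r)) /\
    (forall i j, i != j -> [disjoint cycle_edges (H i) & cycle_edges (H j)]) /\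
    (forall i, [disjoint cycle_edges (H i) & dvop_edges P]).
Proof.
case: r => [|r] // r_ge5 k_le15.
have k_lt : k < 2 ^ r := leq_trans (k_le15 : k < 2 ^ 4) (leq_pexp2l (isT : 0 < 2) (r_ge5 : 4 <= r)).
have [G [L dec]] := cube_dec k_lt.
exists (fun i x => G i x), (walk_dvop L); split; first exact: dec_ham_cycle dec.
split; first exact: walk_dvopP dec.
split; first exact: cycles_dvop_edges dec.
by split; [exact: cycle_edges_disjoint dec | exact: cycle_dvop_edges_disjoint dec].
Qed.
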